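(* Let $P$ be an algebraic $L$-dcpo. Then $\Sigma_LP=(P,\sigma_L(P))$ is a strong locally super-compact $L$-topological space.
   Context: $L$ is a frame with implication $\to$. $L$-subsets: maps to $L$; nonempty: $\bigvee A=1$; ${\rm sub}_X(A,B)=\bigwedge_xA(x)\to B(x)$. $L$-topology: $\mathcal O(X)\subseteq L^X$ closed under finite meets and arbitrary joins containing constants. Base: $\mathcal B\subseteq\mathcal O(X)$ with $A=\bigvee_{B\in\mathcal B}{\rm sub}_X(B,A)\wedge B$ for each open $A$. Super-compact: nonempty $A$ with ${\rm sub}_X(A,\bigvee_iV_i)=\bigvee_i{\rm sub}_X(A,V_i)$ for all families of open $V_i$. Strong locally super-compact: has a base of super-compact open sets. $L$-order $e$ on $P$: $e(x,x)=1$, $e(x,y)\wedge e(y,z)\le e(x,z)$, $e(x,y)\wedge e(y,x)=1\Rightarrow x=y$. ${\downarrow}y(x)=e(x,y)$; $\sqcup A=x$ iff $e(x,y)={\rm sub}_P(A,{\downarrow}y)$ for all $y$; directed: nonempty with $D(x)\wedge D(y)\le\bigvee_zD(z)\wedge e(x,z)\wedge e(y,z)$; ideal: directed lower set; $L$-dcpo: every directed $L$-subset has a supremum. ${\Downarrow}x(y)=\bigwedge\{e(x,\sqcup I)\to I(y):I\text{ ideal with a supremum}\}$. Compact: ${\Downarrow}x(x)=1$; $K(P)$ the set of compact elements; $k(x)(y)=e(y,x)$ if $y\in K(P)$, else $0$; algebraic $L$-dcpo: $L$-dcpo with every $k(x)$ directed and $\sqcup k(x)=x$. $\sigma_L(P)$: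 upper sets $A$ ($A(x)\wedge e(x,y)\le A(y)$) with $A(\sqcup D)=\bigvee_xA(x)\wedge D(x)$ for every directed $D$. *)

From Stdlib Require Import Classical ClassicalEpsilon.

Set Implicit Arguments.
Unset Strict Implicit.

Record frame := Frame {
  car :> Type;
  fle : car -> car -> Prop;
  fle_refl : forall a, fle a a;
  fle_trans : forall a b c, fle a b -> fle b c -> fle a c;
  fle_antisym : forall a b, fle a b -> fle b a -> a = b;
  fsup : (car -> Prop) -> car;
  fsup_ub : forall (S : car -> Prop) a, S a -> fle a (fsup S);
  fsup_least : forall (S : car -> Prop) b, (forall a, S a -> fle a b) -> fle (fsup S) b;
  fmeet : car -> car -> car;
  fmeet_l : forall a b, fle (fmeet a b) a;
  fmeet_r : forall a b, fle (fmeet a b) b;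
  fmeet_glb : forall a b c, fle c a -> fle c b -> fle c (fmeet a b);
  ftop : car;
  ftop_max : forall a, fle a ftop;
  fimpl : car -> car -> car;
  fimpl_adj : forall a b c, fle (fmeet c a) b <-> fle c (fimpl a b)
}.

Section FrameOps.
Variable L : frame.

Definition fbot : L := fsup (fun _ : L => False).

Definition bigjoin (I : Type) (f : I -> L) : L := fsup (fun a => exists i, a = f i).
Definition bigmeet (I : Type) (f : I -> L) : L :=
  fsup (fun a => forall i, fle a (f i)).

Definition nonemptyL (X : Type) (A : X -> L) : Prop := bigjoin A = ftop L.

Definition subL (X : Type) (A B : X -> L) : L :=
  bigmeet (fun x => fimpl (A x) (B x)).

Definition is_Ltopology (X : Type) (O : (X -> L) -> Prop) : Prop :=
  (forall a : L, O (fun _ => a)) /\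
  (forall A B, O A -> O B -> O (fun x => fmeet (A x) (B x))) /\
  (forall (I : Type) (V : I -> X -> L),
      (forall i, O (V i)) -> O (fun x => bigjoin (fun i => V i x))).

Definition is_base (X : Type) (O B : (X -> L) -> Prop) : Prop :=
  (forall U, B U -> O U) /\
  (forall A, O A ->
     A = (fun x => bigjoin (fun U : {U : X -> L | B U} =>
                               fmeet (subL (proj1_sig U) A) (proj1_sig U x)))).

Definition supercompact (X : Type) (O : (X -> L) -> Prop) (A : X -> L) : Prop :=
  nonemptyL A /\
  forall (I : Type) (V : I -> X -> L), (forall i, O (V i)) ->
    subL A (fun x => bigjoin (fun i => V i x)) = bigjoin (fun i => subL A (V i)).

Definition strong_locally_supercompact (X : Type) (O : (X -> L) -> Prop) : Prop :=
  is_Ltopology O /\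
  exists B : (X -> L) -> Prop, is_base O B /\ forall U, B U -> supercompact O U.

Section LOrder.
Variables (P : Type) (e : P -> P -> L).

Definition is_Lorder : Prop :=
  (forall x, e x x = ftop L) /\
  (forall x y z, fle (fmeet (e x y) (e y z)) (e x z)) /\
  (forall x y, fmeet (e x y) (e y x) = ftop L -> x = y).

Definition down (y : P) : P -> L := fun x => e x y.

Definition is_sup (A : P -> L) (x : P) : Prop :=
  forall y, e x y = subL A (down y).

Definition directed (D : P -> L) : Prop :=
  nonemptyL D /\
  forall x y, fle (fmeet (D x) (D y))
                  (bigjoin (fun z => fmeet (D z) (fmeet (e x z) (e y z)))).

Definition lower_set (A : P -> L) : Prop :=
  forall x y, fle (fmeet (A x) (e y x)) (A y).

Definition upper_set (A : P -> L) : Prop :=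
  forall x y, fle (fmeet (A x) (e x y)) (A y).

Definition ideal (I : P -> L) : Prop := directed I /\ lower_set I.

Definition Ldcpo : Prop := forall D, directed D -> exists x, is_sup D x.

Definition waybelow (x : P) : P -> L := fun y =>
  bigmeet (fun p : {p : (P -> L) * P | ideal (fst p) /\ is_sup (fst p) (snd p)} =>
             fimpl (e x (snd (proj1_sig p))) (fst (proj1_sig p) y)).

Definition compact (x : P) : Prop := waybelow x x = ftop L.

Definition kset (x : P) : P -> L := fun y =>
  if excluded_middle_informative (compact y) then e y x else fbot.

Definition algebraic : Prop :=
  Ldcpo /\ forall x, directed (kset x) /\ is_sup (kset x) x.

Definition sigmaL (A : P -> L) : Prop :=
  upper_set A /\
  forall D s, directed D -> is_sup D s ->
    A s = bigjoin (fun x => fmeet (A x) (D x)).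

End LOrder.
End FrameOps.

(** For a compact element [k] the principal filter [e k] is Scott open: a
    directed [D] with supremum [s] generates an ideal with the same supremum,
    and compactness of [k] puts [k] in that ideal to degree [e k s].
    For every upper set [A] one has [subL (e k) A = A k], so [e k] is
    super-compact, joins of open sets being computed pointwise.  Finally each
    [x] is the directed supremum of the compact elements below it, so Scott
    continuity writes every open [A] as [A x = \/_k A k /\ e k x], which is
    the base equation for the principal filters of compact elements. *)
From Stdlib Require Import ClassicalEpsilon FunctionalExtensionality.

Set Implicit Arguments.
Unset Strict Implicit.

Ltac fmeet_proj := first [ apply fle_refl
  | eapply fle_trans; [apply fmeet_l | fmeet_proj]
  | eapply fle_trans; [apply fmeet_r | fmeet_proj] ].
Ltac fmeet_solve := repeat apply fmeet_glb; fmeet_proj.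

Section FrameFacts.
Variable L : frame.
Implicit Types a b c : L.

Lemma fle_top_eq a : fle (ftop L) a -> a = ftop L.
Proof. intros; apply fle_antisym; auto using ftop_max. Qed.

Lemma fbot_least a : fle (fbot L) a.
Proof. apply fsup_least; contradiction. Qed.

Lemma fimpl_mp a b : fle (fmeet (fimpl a b) a) b.
Proof. apply fimpl_adj, fle_refl. Qed.

Lemma bigjoin_ub I (f : I -> L) i : fle (f i) (bigjoin f).
Proof. apply fsup_ub; eauto. Qed.

Lemma bigjoin_least I (f : I -> L) b : (forall i, fle (f i) b) -> fle (bigjoin f) b.
Proof. intros H; apply fsup_least; intros a [i ->]; auto. Qed.

Lemma bigjoin_mono I (f g : I -> L) :
  (forall i, fle (f i) (g i)) -> fle (bigjoin f) (bigjoin g).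
Proof.
  intros H; apply bigjoin_least; intro i.
  eapply fle_trans; [apply H | apply bigjoin_ub].
Qed.

Lemma bigmeet_lb I (f : I -> L) i : fle (bigmeet f) (f i).
Proof. apply fsup_least; auto. Qed.

Lemma bigmeet_greatest I (f : I -> L) c : (forall i, fle c (f i)) -> fle c (bigmeet f).
Proof. intros H; apply fsup_ub; auto. Qed.

Lemma fmeet_bigjoinl_le I (f : I -> L) c b :
  (forall i, fle (fmeet (f i) c) b) -> fle (fmeet (bigjoin f) c) b.
Proof. intros H; apply fimpl_adj, bigjoin_least; intro i; apply fimpl_adj, H. Qed.

Lemma fmeet_bigjoinr_le I (f : I -> L) c b :
  (forall i, fle (fmeet c (f i)) b) -> fle (fmeet c (bigjoin f)) b.
Proof.
  intros H; eapply fle_trans; [|apply fmeet_bigjoinl_le with (c := c)].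
  - fmeet_solve.
  - intro i; eapply fle_trans; [|apply (H i)]; fmeet_solve.
Qed.

Lemma subL_elim X (A B : X -> L) x : fle (fmeet (subL A B) (A x)) (B x).
Proof.
  eapply fle_trans; [|apply (fimpl_mp (A x))].
  apply fmeet_glb; [|apply fmeet_r].
  eapply fle_trans; [apply fmeet_l | apply (bigmeet_lb (fun x => fimpl (A x) (B x)))].
Qed.

Lemma subL_intro X (A B : X -> L) c :
  (forall x, fle (fmeet c (A x)) (B x)) -> fle c (subL A B).
Proof. intros H; apply bigmeet_greatest; intro x; apply fimpl_adj, H. Qed.

End FrameFacts.

Section LPreorder.
Variables (L : frame) (P : Type) (e : P -> P -> L).
Hypothesis e_refl : forall x, e x x = ftop L.
Hypothesis e_trans : forall x y z, fle (fmeet (e x y) (e y z)) (e x z).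

Lemma is_sup_ub D s x : is_sup e D s -> fle (D x) (e x s).
Proof.
  intros Hs; eapply fle_trans; [|apply (subL_elim D (down e s) x)].
  apply fmeet_glb; [|apply fle_refl].
  rewrite <- Hs, e_refl; apply ftop_max.
Qed.

Lemma is_sup_least D s y c :
  is_sup e D s -> (forall x, fle (fmeet c (D x)) (e x y)) -> fle c (e s y).
Proof. intros Hs H; rewrite Hs; apply subL_intro, H. Qed.

Lemma upper_set_sup A D s x :
  upper_set e A -> is_sup e D s -> fle (fmeet (A x) (D x)) (A s).
Proof.
  intros HA Hs; eapply fle_trans; [|apply (HA x s)].
  apply fmeet_glb; [apply fmeet_l|].
  eapply fle_trans; [apply fmeet_r | apply is_sup_ub, Hs].
Qed.

Lemma sigmaL_intro A :
  upper_set e A ->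
  (forall D s, directed e D -> is_sup e D s ->
     fle (A s) (bigjoin (fun x => fmeet (A x) (D x)))) ->
  sigmaL e A.
Proof.
  intros HA Hscott; split; [exact HA|].
  intros D s HD Hs; apply fle_antisym; [auto|].
  apply bigjoin_least; intro x; apply upper_set_sup; assumption.
Qed.

Lemma upper_set_bigjoin I (V : I -> P -> L) :
  (forall i, upper_set e (V i)) -> upper_set e (fun x => bigjoin (fun i => V i x)).
Proof.
  intros HV x y; apply fmeet_bigjoinl_le; intro i.
  eapply fle_trans; [apply HV | apply (bigjoin_ub (fun i => V i y))].
Qed.

Lemma sigmaL_const a : sigmaL e (fun _ => a).
Proof.
  apply sigmaL_intro; [intros x y; apply fmeet_l|].
  intros D s [HD_nonempty _] _.
  eapply fle_trans; [|apply fmeet_bigjoinr_le with (f := D)].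
  - apply fmeet_glb; [apply fle_refl|].
    rewrite HD_nonempty; apply ftop_max.
  - intro x; apply (bigjoin_ub (fun x => fmeet a (D x)) x).
Qed.

Lemma sigmaL_fmeet A B :
  sigmaL e A -> sigmaL e B -> sigmaL e (fun x => fmeet (A x) (B x)).
Proof.
  intros [HA HA_scott] [HB HB_scott]; apply sigmaL_intro.
  { intros x y; apply fmeet_glb.
    - eapply fle_trans; [|apply (HA x)]; fmeet_solve.
    - eapply fle_trans; [|apply (HB x)]; fmeet_solve. }
  intros D s HD Hs.
  rewrite (HA_scott D s HD Hs), (HB_scott D s HD Hs).
  apply fmeet_bigjoinl_le; intro x; apply fmeet_bigjoinr_le; intro y.
  assert (Hxy : fle (fmeet (fmeet (A x) (D x)) (fmeet (B y) (D y)))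
    (fmeet (fmeet (A x) (B y))
       (bigjoin (fun z => fmeet (D z) (fmeet (e x z) (e y z)))))).
  { apply fmeet_glb; [fmeet_solve|].
    eapply fle_trans; [|apply (proj2 HD x y)]; fmeet_solve. }
  eapply fle_trans; [exact Hxy|].
  apply fmeet_bigjoinr_le; intro z.
  eapply fle_trans;
    [|apply (bigjoin_ub (fun z => fmeet (fmeet (A z) (B z)) (D z)) z)].
  repeat apply fmeet_glb;
    [eapply fle_trans; [|apply (HA x z)] | eapply fle_trans; [|apply (HB y z)] | ];
    fmeet_solve.
Qed.

Lemma sigmaL_bigjoin I (V : I -> P -> L) :
  (forall i, sigmaL e (V i)) -> sigmaL e (fun x => bigjoin (fun i => V i x)).
Proof.
  intros HV; apply sigmaL_intro.
  { apply upper_set_bigjoin; intro i; apply HV. }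
  intros D s HD Hs; apply bigjoin_least; intro i.
  rewrite (proj2 (HV i) D s HD Hs).
  apply bigjoin_mono; intro x; apply fmeet_glb; [|apply fmeet_r].
  eapply fle_trans; [apply fmeet_l | apply (bigjoin_ub (fun i => V i x))].
Qed.

Lemma sigmaL_topology : is_Ltopology (sigmaL e).
Proof.
  split; [exact sigmaL_const|].
  split; [exact sigmaL_fmeet | exact sigmaL_bigjoin].
Qed.

Definition lower_closure (D : P -> L) : P -> L :=
  fun y => bigjoin (fun x => fmeet (D x) (e y x)).

Lemma lower_closure_ge D y : fle (D y) (lower_closure D y).
Proof.
  eapply fle_trans; [|apply (bigjoin_ub (fun x => fmeet (D x) (e y x)) y)].
  apply fmeet_glb; [apply fle_refl|].
  rewrite e_refl; apply ftop_max.
Qed.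

Lemma lower_closure_lower D : lower_set e (lower_closure D).
Proof.
  intros x y; apply fmeet_bigjoinl_le; intro w.
  eapply fle_trans; [|apply (bigjoin_ub (fun w => fmeet (D w) (e y w)) w)].
  apply fmeet_glb; [fmeet_solve|].
  eapply fle_trans; [|apply (e_trans y x w)]; fmeet_solve.
Qed.

Lemma lower_closure_directed D : directed e D -> directed e (lower_closure D).
Proof.
  intros [HD_nonempty HD]; split.
  { apply fle_top_eq; rewrite <- HD_nonempty at 1.
    apply bigjoin_mono; intro; apply lower_closure_ge. }
  intros a b; apply fmeet_bigjoinl_le; intro x; apply fmeet_bigjoinr_le; intro y.
  assert (Hxy : fle (fmeet (fmeet (D x) (e a x)) (fmeet (D y) (e b y)))
    (fmeet (fmeet (e a x) (e b y))
       (bigjoin (fun z => fmeet (D z) (fmeet (e x z) (e y z)))))).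
  { apply fmeet_glb; [fmeet_solve|].
    eapply fle_trans; [|apply (HD x y)]; fmeet_solve. }
  eapply fle_trans; [exact Hxy|].
  apply fmeet_bigjoinr_le; intro z.
  eapply fle_trans;
    [|apply (bigjoin_ub (fun z => fmeet (lower_closure D z) (fmeet (e a z) (e b z))) z)].
  repeat apply fmeet_glb.
  - eapply fle_trans; [|apply lower_closure_ge]; fmeet_solve.
  - eapply fle_trans; [|apply (e_trans a x z)]; fmeet_solve.
  - eapply fle_trans; [|apply (e_trans b y z)]; fmeet_solve.
Qed.

Lemma lower_closure_sup D s : is_sup e D s -> is_sup e (lower_closure D) s.
Proof.
  intros Hs y; apply fle_antisym.
  - apply subL_intro; intro z; apply fmeet_bigjoinr_le; intro x.
    eapply fle_trans; [|apply (e_trans z x y)].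
    apply fmeet_glb; [fmeet_solve|].
    eapply fle_trans; [|apply (e_trans x s y)].
    apply fmeet_glb; [|fmeet_solve].
    eapply fle_trans; [|apply (is_sup_ub x Hs)]; fmeet_solve.
  - apply (is_sup_least Hs); intro x.
    eapply fle_trans; [|apply (subL_elim (lower_closure D) (down e y) x)].
    apply fmeet_glb; [fmeet_solve|].
    eapply fle_trans; [|apply lower_closure_ge]; fmeet_solve.
Qed.

Lemma compact_le_ideal k I s :
  compact e k -> ideal e I -> is_sup e I s -> fle (e k s) (I k).
Proof.
  intros Hk HI Hs.
  pose (Is := exist (fun p : (P -> L) * P => ideal e (fst p) /\ is_sup e (fst p) (snd p))
                (I, s) (conj HI Hs)).
  assert (Himpl : fle (ftop L) (fimpl (e k s) (I k))).
  { rewrite <- Hk.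
    exact (bigmeet_lb (fun p : {p : (P -> L) * P | ideal e (fst p) /\ is_sup e (fst p) (snd p)} =>
             fimpl (e k (snd (proj1_sig p))) (fst (proj1_sig p) k)) Is). }
  eapply fle_trans; [|apply fimpl_mp].
  apply fmeet_glb; [|apply fle_refl].
  eapply fle_trans; [apply ftop_max | exact Himpl].
Qed.

Lemma sigmaL_up_compact k : compact e k -> sigmaL e (e k).
Proof.
  intros Hk; apply sigmaL_intro; [intros x y; apply e_trans|].
  intros D s HD Hs.
  assert (Hideal : ideal e (lower_closure D)).
  { split; [apply lower_closure_directed, HD | apply lower_closure_lower]. }
  eapply fle_trans; [apply (compact_le_ideal Hk Hideal (lower_closure_sup Hs))|].
  apply bigjoin_mono; intro x; fmeet_solve.
Qed.

Lemma subL_up_upper k A : upper_set e A -> subL (e k) A = A k.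
Proof.
  intros HA; apply fle_antisym.
  - eapply fle_trans; [|apply (subL_elim (e k) A k)].
    apply fmeet_glb; [apply fle_refl|].
    rewrite e_refl; apply ftop_max.
  - apply subL_intro; intro x; apply HA.
Qed.

Lemma supercompact_up k : supercompact (sigmaL e) (e k).
Proof.
  split.
  { apply fle_top_eq; rewrite <- (e_refl k); apply (bigjoin_ub (e k)). }
  intros I V HV.
  rewrite subL_up_upper by (apply upper_set_bigjoin; intro i; apply HV).
  f_equal; apply functional_extensionality; intro i.
  symmetry; apply subL_up_upper, HV.
Qed.

Definition compact_up (U : P -> L) : Prop := exists k, compact e k /\ U = e k.

Lemma sigmaL_compact_up_base : algebraic e -> is_base (sigmaL e) compact_up.
Proof.
  intros [_ Halg]; split.
  { intros U [k [Hk ->]]; apply sigmaL_up_compact, Hk. }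
  intros A [HA HA_scott]; apply functional_extensionality; intro x.
  apply fle_antisym.
  - destruct (Halg x) as [Hdir Hsup].
    rewrite (HA_scott _ _ Hdir Hsup).
    apply bigjoin_least; intro k; unfold kset.
    destruct (excluded_middle_informative (compact e k)) as [Hk|Hk].
    + pose (Uk := exist compact_up (e k) (ex_intro _ k (conj Hk eq_refl))).
      eapply fle_trans; [|apply (bigjoin_ub
        (fun U : {U : P -> L | compact_up U} =>
           fmeet (subL (proj1_sig U) A) (proj1_sig U x)) Uk)].
      simpl; rewrite (subL_up_upper k HA); apply fle_refl.
    + eapply fle_trans; [apply fmeet_r | apply fbot_least].
  - apply bigjoin_least; intros [U HU]; apply subL_elim.
Qed.

End LPreorder.

Unset Implicit Arguments.

Theorem proposition5p6 (L : frame) (P : Type) (e : P -> P -> L) :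
  is_Lorder e -> algebraic e ->
  strong_locally_supercompact (sigmaL e).
Proof.
  intros [e_refl [e_trans _]] Halg; split.
  - exact (sigmaL_topology e_refl).
  - exists (compact_up e); split.
    + exact (sigmaL_compact_up_base e_refl e_trans Halg).
    + intros U [k [_ ->]]; apply (supercompact_up e_refl).
Qed.
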